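(* (i) Let $\boldsymbol{\pi}\in\mathbb{R}^n$ be a probability vector with $\boldsymbol{\pi}>0$ entrywise, and let $\mathcal{S}$ be an irreducible pattern. Then there exists a reversible stochastic matrix $X\in\mathbb{R}^{n\times n}(\mathcal{S})$ with stationary distribution $\boldsymbol{\pi}$ (in particular $\pi_iX_{ij}=\pi_jX_{ji}$ for all $i,j$). (ii) Let $\mathcal{P}$ and $\mathcal{S}$ be patterns, and let $P\in\mathbb{R}^{n\times n}(\mathcal{P})$ be a reversible stochastic matrix with stationary distribution $\boldsymbol{\pi}$. Then the set \[ \mathcal{F}=\{X\in\mathbb{R}^{n\times n}(\mathcal{S}\cup\mathcal{P}) : X_{ij}=P_{ij}\text{ for }\{i,j\}\in\mathcal{P}\setminus\mathcal{S},\ X\mathbf{1}=\mathbf{1},\ D_{\boldsymbol{\pi}}X=X^\top D_{\boldsymbol{\pi}},\ X\ge 0\} \] is not empty.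
   Context: A stochastic matrix is a nonnegative real matrix $P$ with $P\mathbf{1}=\mathbf{1}$, where $\mathbf{1}$ is the all-ones vector; $X\ge 0$ means entrywise nonnegativity. A stationary distribution of $P$ is a probability vector $\boldsymbol{\pi}$ with $\boldsymbol{\pi}^\top P=\boldsymbol{\pi}^\top$. A stochastic matrix is reversible if it is irreducible and its (unique, positive) stationary distribution $\boldsymbol{\pi}$ satisfies $\pi_iP_{ij}=\pi_jP_{ji}$ for all $i,j$, i.e. $D_{\boldsymbol{\pi}}P=P^\top D_{\boldsymbol{\pi}}$, with $D_{\boldsymbol{\pi}}$ the diagonal matrix with diagonal $\boldsymbol{\pi}$. A pattern $\mathcal{S}$ is a set of unordered pairs $\{i,j\}$, $1\le i,j\le n$, containing $\{i,i\}$ for all $i$. $\mathbb{R}^{n\times n}(\mathcal{S})$ is the set of real $n\times n$ matrices $\Delta$ with $\Delta_{ij}=\Delta_{ji}=0$ whenever $\{i,j\}\notin\mathcal{S}$. $\mathbb{R}^{n\times n}_{\mathrm{exact}}(\mathcal{S})$ is the set of real $n\times n$ matrices $\Delta$ such that ($\Delta_{ij}\neq0$ and $\Delta_{ji}\ne 0$) if and only if $\{i,j\}\in\mathcal{S}$. A pattern $\mathcal{S}$ is irreducible if every matrix in $\mathbb{R}^{n\times n}_{\mathrm{exact}}(\mathcal{S})$ is irreducible. *)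

From HB Require Import structures.
From mathcomp Require Import all_boot all_order all_algebra.
Set Implicit Arguments. Unset Strict Implicit. Unset Printing Implicit Defensive.
Import Order.TTheory GRing.Theory Num.Theory.
Local Open Scope ring_scope.

Section Defs.
Variables (R : realFieldType) (n : nat).

(* A pattern: a set of unordered pairs {i,j} containing every {i,i},
   encoded as a reflexive symmetric boolean relation on 'I_n
   ({i,j} \in S  <->  S i j). *)
Definition pattern (S : rel 'I_n) : Prop :=
  (forall i, S i i) /\ (forall i j, S i j = S j i).

Definition patU (S P : rel 'I_n) : rel 'I_n := fun i j => S i j || P i j.

Definition in_pattern (S : rel 'I_n) (A : 'M[R]_n) : Prop :=
  forall i j, ~~ S i j -> A i j = 0 /\ A j i = 0.

Definition in_exact_pattern (S : rel 'I_n) (A : 'M[R]_n) : Prop :=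
  forall i j, (A i j != 0 /\ A j i != 0) <-> S i j.

Definition irreducible_mx (A : 'M[R]_n) : Prop :=
  forall i j, connect (fun k l => A k l != 0) i j.

Definition irreducible_pattern (S : rel 'I_n) : Prop :=
  forall A : 'M[R]_n, in_exact_pattern S A -> irreducible_mx A.

Definition ones : 'cV[R]_n := const_mx 1.

Definition stochastic (P : 'M[R]_n) : Prop :=
  (forall i j, 0 <= P i j) /\ P *m ones = ones.

Definition prob_vec (pi : 'rV[R]_n) : Prop :=
  (forall i, 0 <= pi 0 i) /\ \sum_i pi 0 i = 1.

Definition stationary (pi : 'rV[R]_n) (P : 'M[R]_n) : Prop :=
  prob_vec pi /\ pi *m P = pi.

Definition detailed_balance (pi : 'rV[R]_n) (P : 'M[R]_n) : Prop :=
  diag_mx pi *m P = P^T *m diag_mx pi.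

Definition reversible (P : 'M[R]_n) : Prop :=
  stochastic P /\ irreducible_mx P /\
  forall pi, stationary pi P -> detailed_balance pi P.

End Defs.

From HB Require Import structures.
From mathcomp Require Import all_boot all_order all_algebra.
From mathcomp Require Import ring.
Set Implicit Arguments.
Unset Strict Implicit.
Unset Printing Implicit Defensive.
Import Order.TTheory GRing.Theory Num.Theory.
Local Open Scope ring_scope.

(* For (i), let the chain propose a jump from i to j with probability
   pi_j whenever {i,j} is in S and stay put otherwise. Then
   pi_i X_ij = pi_i pi_j is symmetric, so pi is a stationary distribution
   satisfying detailed balance; the diagonal is positive and the off-diagonal
   support is exactly S, so X lies in R^{nxn}_exact(S) and is irreducible.
   Irreducibility makes the stationary distribution unique: if pi' is
   stationary then pi'/pi is harmonic for X, hence constant by the maximum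
   principle, so every stationary distribution satisfies detailed balance.
   Part (ii) is witnessed by P itself. *)

Lemma connect_forward_closed (T : finType) (e : rel T) (a : pred T) :
  (forall x y, a x -> e x y -> a y) -> forall x y, connect e x y -> a x -> a y.
Proof.
move=> a_fwd x _ /connectP[p e_p ->].
by elim: p x e_p => //= z p IHp x /andP[e_xz /IHp] a_z /(a_fwd _ _)/(_ e_xz).
Qed.

Section MarkovChain.
Variables (R : realFieldType) (n : nat) (X : 'M[R]_n).
Hypotheses (X_ge0 : forall i j, 0 <= X i j) (X_rows : forall i, \sum_j X i j = 1).

Lemma stochastic_rows : stochastic X.
Proof.
split=> //; apply/matrixP => i k; rewrite !mxE -[RHS](X_rows i).
by apply: eq_bigr => j _; rewrite mxE mulr1.
Qed.

Lemma harmonic_irreducible_const (h : 'I_n -> R) :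
  irreducible_mx X -> (forall i, \sum_j X i j * h j = h i) ->
  forall i j, h i = h j.
Proof.
move=> X_irr h_harm i0 j0.
have [k _ k_max] := @arg_maxP _ _ 'I_n i0 xpredT h isT.
suff h_k l : h l = h k by rewrite !h_k.
have argmax_fwd x y : h x == h k -> X x y != 0 -> h y == h k.
  move=> /eqP h_x X_xy.
  have gap_sum : \sum_z X x z * (h k - h z) = 0.
    under eq_bigr do rewrite mulrBr.
    by rewrite sumrB -mulr_suml X_rows h_harm mul1r h_x subrr.
  have gap_ge0 z : true -> 0 <= X x z * (h k - h z).
    by move=> _; rewrite mulr_ge0 // subr_ge0; apply: k_max.
  move/eqP: (psumr_eq0P gap_ge0 gap_sum (i := y) isT).
  by rewrite mulf_eq0 (negbTE X_xy) subr_eq0 eq_sym.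
apply/eqP; exact: (connect_forward_closed (a := fun x => h x == h k) argmax_fwd
                                          (X_irr k l)).
Qed.

Variable pi : 'rV[R]_n.
Hypotheses (pi_gt0 : forall i, 0 < pi 0 i)
           (X_balance : forall i j, pi 0 i * X i j = pi 0 j * X j i).

Lemma balance_invariant : pi *m X = pi.
Proof.
apply/matrixP => i j; rewrite (ord1 i) mxE.
under eq_bigr do rewrite X_balance.
by rewrite -mulr_sumr X_rows mulr1.
Qed.

Lemma balance_detailed_balance : detailed_balance pi X.
Proof.
apply/matrixP => i j.
by rewrite mul_diag_mx mul_mx_diag !mxE X_balance mulrC.
Qed.

Lemma balance_stationary_unique (pi' : 'rV[R]_n) :
  irreducible_mx X -> \sum_i pi 0 i = 1 -> stationary pi' X -> pi' = pi.
Proof.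
move=> X_irr pi_sum [[_ pi'_sum] pi'_inv].
pose h i := pi' 0 i / pi 0 i.
have pi_neq0 i : pi 0 i != 0 by rewrite lt0r_neq0.
have h_harm j : \sum_i X j i * h i = h j.
  apply: (mulfI (pi_neq0 j)); rewrite mulr_sumr mulrC divfK //.
  rewrite -[in RHS]pi'_inv mxE; apply: eq_bigr => i _.
  by rewrite mulrA X_balance /h; field.
have h_const := harmonic_irreducible_const X_irr h_harm.
have pi'E i : pi' 0 i = h i * pi 0 i by rewrite /h divfK.
have h_one j : h j = 1.
  move: pi'_sum; under eq_bigr do rewrite pi'E (h_const _ j).
  by rewrite -mulr_sumr pi_sum mulr1.
by apply/matrixP => i j; rewrite (ord1 i) pi'E h_one mul1r.
Qed.

Lemma balance_reversible :
  irreducible_mx X -> \sum_i pi 0 i = 1 -> reversible X.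
Proof.
move=> X_irr pi_sum; split; first exact: stochastic_rows.
split=> // pi' pi'_stat.
rewrite (balance_stationary_unique X_irr pi_sum pi'_stat).
exact: balance_detailed_balance.
Qed.

End MarkovChain.

Section PatternKernel.
Variables (R : realFieldType) (n : nat) (pi : 'rV[R]_n) (S : rel 'I_n).
Hypotheses (pi_prob : prob_vec pi) (pi_gt0 : forall i, 0 < pi 0 i)
           (S_pattern : pattern S).

Definition pattern_kernel : 'M[R]_n :=
  \matrix_(i, j) ((if S i j then pi 0 j else 0) +
                  (if j == i then 1 - \sum_(k | S i k) pi 0 k else 0)).

Local Notation X := pattern_kernel.

Lemma pattern_kernel_stay_ge0 i : 0 <= 1 - \sum_(k | S i k) pi 0 k.
Proof.
have [pi_ge0 pi_sum] := pi_prob.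
by rewrite subr_ge0 -pi_sum big_mkcond /=; apply: ler_sum => k _; case: ifP.
Qed.

Lemma pattern_kernel_ge0 i j : 0 <= X i j.
Proof.
have [pi_ge0 _] := pi_prob.
by rewrite mxE addr_ge0 //; case: ifP => // _; apply: pattern_kernel_stay_ge0.
Qed.

Lemma pattern_kernel_rows i : \sum_j X i j = 1.
Proof.
under eq_bigr do rewrite mxE.
by rewrite big_split /= -!big_mkcond /= big_pred1_eq addrC subrK.
Qed.

Lemma pattern_kernel_offdiag i j : i != j -> X i j = if S i j then pi 0 j else 0.
Proof. by move=> ij; rewrite mxE eq_sym (negbTE ij) addr0. Qed.

Lemma pattern_kernel_diag_gt0 i : 0 < X i i.
Proof.
have [S_refl _] := S_pattern.
by rewrite mxE S_refl eqxx ltr_wpDr ?pattern_kernel_stay_ge0.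
Qed.

Lemma pattern_kernel_balance i j : pi 0 i * X i j = pi 0 j * X j i.
Proof.
have [_ S_sym] := S_pattern.
have [-> // | ij] := eqVneq i j.
have ji : j != i by rewrite eq_sym.
rewrite (pattern_kernel_offdiag ij) (pattern_kernel_offdiag ji) (S_sym j i).
by case: ifP; rewrite ?mulr0 // mulrC.
Qed.

Lemma pattern_kernel_in_pattern : in_pattern S X.
Proof.
have [S_refl S_sym] := S_pattern.
move=> i j notS; have ij : i != j by apply: contraNneq notS => ->; apply: S_refl.
have ji : j != i by rewrite eq_sym.
rewrite (pattern_kernel_offdiag ij) (pattern_kernel_offdiag ji) (S_sym j i).
by rewrite (negbTE notS).
Qed.

Lemma pattern_kernel_exact : in_exact_pattern S X.
Proof.
have [S_refl S_sym] := S_pattern.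
move=> i j; have [<- | ij] := eqVneq i j.
  by rewrite S_refl gt_eqF ?pattern_kernel_diag_gt0.
have ji : j != i by rewrite eq_sym.
rewrite (pattern_kernel_offdiag ij) (pattern_kernel_offdiag ji) (S_sym j i).
case: (S i j); first by rewrite !gt_eqF ?pi_gt0.
by rewrite eqxx; split=> // -[].
Qed.

End PatternKernel.

Theorem proposition2p3 (R : realFieldType) (n : nat) :
  (* (i) *)
  (forall (pi : 'rV[R]_n) (S : rel 'I_n),
      prob_vec pi -> (forall i, 0 < pi 0 i) ->
      pattern S -> irreducible_pattern R S ->
      exists X : 'M[R]_n,
        in_pattern S X /\ reversible X /\ stationary pi X /\
        (forall i j, pi 0 i * X i j = pi 0 j * X j i))
  /\
  (* (ii) *)
  (forall (Pp S : rel 'I_n) (P : 'M[R]_n) (pi : 'rV[R]_n),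
      pattern Pp -> pattern S ->
      in_pattern Pp P -> reversible P -> stationary pi P ->
      exists X : 'M[R]_n,
        in_pattern (patU S Pp) X /\
        (forall i j, Pp i j -> ~~ S i j -> X i j = P i j) /\
        X *m ones R n = ones R n /\
        detailed_balance pi X /\
        (forall i j, 0 <= X i j)).
Proof.
split=> [pi S pi_prob pi_gt0 S_pattern S_irr |
          Pp S P pi _ _ P_in [[P_ge0 P_rows] [_ P_rev]] pi_stat].
  have [_ pi_sum] := pi_prob.
  pose X := pattern_kernel pi S.
  have X_ge0 := pattern_kernel_ge0 S pi_prob.
  have X_rows := pattern_kernel_rows pi S.
  have X_balance := pattern_kernel_balance pi S_pattern.
  have X_irr := S_irr X (pattern_kernel_exact pi_prob pi_gt0 S_pattern).
  exists X; split; first exact: pattern_kernel_in_pattern.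
  split; first exact: (balance_reversible X_ge0 X_rows pi_gt0 X_balance X_irr pi_sum).
  by split=> //; split; last exact: balance_invariant.
exists P; split.
  by move=> i j; rewrite /patU negb_or => /andP[_]; apply: P_in.
by do 3!split=> //; apply: P_rev.
Qed.
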